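(* A strongly semiconnected digraph is doubly stochasticable if and only if all of its strongly connected components are doubly stochasticable.
   Context: A digraph $G=(V,E)$, $V=\{v_1,\dots,v_n\}$, $E\subseteq V\times V$. $G$ is strongly semiconnected if, for all $v,w\in V$, a directed path from $v$ to $w$ implies one from $w$ to $v$. The strongly connected components are the maximal strongly connected subdigraphs. An adjacency matrix assigned to $G$ is $A\in\mathbb{R}^{n\times n}_{\geq0}$ with $a_{ij}>0$ iff $(v_i,v_j)\in E$; $G$ is doubly stochasticable if it admits an adjacency matrix whose row and column sums all equal $1$. *)

From HB Require Import structures.
From mathcomp Require Import all_boot all_order all_algebra.
From mathcomp Require Import reals.
Set Implicit Arguments. Unset Strict Implicit. Unset Printing Implicit Defensive.
Import Order.TTheory GRing.Theory Num.Theory.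
Local Open Scope ring_scope.

(* A digraph is G = (T, E) with T a finite vertex type and E : rel T the
   edge relation ((v,w) \in E  iff  E v w).  Directed paths = connect E. *)

Definition strongly_semiconnected (T : finType) (E : rel T) : Prop :=
  forall v w : T, connect E v w -> connect E w v.

Definition subdigraph (T : finType) (E : rel T) (S : {set T}) (F : rel T) : Prop :=
  forall x y, F x y -> [&& x \in S, y \in S & E x y].

Definition strongly_connected_sub (T : finType) (S : {set T}) (F : rel T) : Prop :=
  forall v w, v \in S -> w \in S -> connect F v w.

Definition is_scc (T : finType) (E : rel T) (S : {set T}) (F : rel T) : Prop :=
  [/\ S != set0, subdigraph E S F, strongly_connected_sub S F &
      forall (S' : {set T}) (F' : rel T),
        subdigraph E S' F' -> strongly_connected_sub S' F' ->
        S \subset S' -> (forall x y, F x y -> F' x y) ->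
        S' = S /\ (forall x y, F' x y = F x y)].

Definition ds_on (R : realType) (T : finType) (S : {set T}) (F : rel T) : Prop :=
  exists A : T -> T -> R,
    [/\ forall x y, x \in S -> y \in S -> 0 <= A x y,
        forall x y, x \in S -> y \in S -> (0 < A x y <-> F x y),
        forall x, x \in S -> \sum_(y in S) A x y = 1 &
        forall y, y \in S -> \sum_(x in S) A x y = 1].

Definition doubly_stochasticable (R : realType) (T : finType) (E : rel T) : Prop :=
  ds_on R [set: T] E.

From mathcomp Require Import all_boot all_order all_algebra reals.
From mathcomp Require Import boolp.
Set Implicit Arguments. Unset Strict Implicit. Unset Printing Implicit Defensive.
Import Order.TTheory GRing.Theory Num.Theory.
Local Open Scope ring_scope.

(* In a strongly semiconnected digraph [connect E] is an equivalence relation,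
   its classes are exactly the strongly connected components, and no edge leaves
   or enters a class.  Hence a doubly stochastic adjacency matrix of the whole
   digraph vanishes across classes, so its restriction to a component keeps all
   row and column sums; conversely, the block diagonal matrix assembled from
   doubly stochastic matrices of the components is doubly stochastic. *)

Section InducedSubdigraphs.

Variables (T : finType) (E : rel T).
Implicit Types (S : {set T}) (F : rel T).

Definition induced (S : {set T}) : rel T :=
  [rel a b | [&& a \in S, b \in S & E a b]].

Definition component (x : T) : {set T} := [set y | connect E x y].

Lemma mem_component x : x \in component x.
Proof. by rewrite inE connect0. Qed.

Lemma semiconnected_connect_sym : strongly_semiconnected E -> connect_sym E.
Proof. by move=> semiE v w; apply/idP/idP; apply: semiE. Qed.

Lemma induced_subdigraph S : subdigraph E S (induced S).
Proof. by []. Qed.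

Lemma connect_subdigraph S F : subdigraph E S F -> subrel (connect F) (connect E).
Proof. by move=> sF; apply: connect_sub => a b /sF /and3P[_ _ /connect1]. Qed.

Lemma connect_induced_closed S x y :
  closed E S -> x \in S -> connect E x y -> connect (induced S) x y.
Proof.
move=> clS xS /connectP[p Ep ->]; apply/connectP; exists p => //.
have pS : all [in S] (x :: p).
  by apply/allP => z /(path_connect Ep) /(closed_connect clS) <-.
by apply: sub_in_path pS Ep => a b aS bS ab; apply/and3P.
Qed.

Lemma strongly_connected_sub_component S F x :
  subdigraph E S F -> strongly_connected_sub S F -> x \in S ->
  S \subset component x.
Proof.
move=> sF scF xS; apply/subsetP => y yS.
by rewrite inE; apply: connect_subdigraph sF _ _ (scF _ _ xS yS).
Qed.

Lemma ds_on_closed (R : realType) S F :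
  closed E S -> {in S &, F =2 E} -> doubly_stochasticable R E -> ds_on R S F.
Proof.
move=> clS FE [A [A_ge0 A_gt0 A_row A_col]].
have A_cross a b : (a \in S) != (b \in S) -> A a b = 0.
  move=> ab_cross; apply/eqP; rewrite eq_le A_ge0 ?inE // andbT leNgt.
  apply/negP => /(A_gt0 _ _ (in_setT a) (in_setT b)) /clS abS.
  by rewrite abS eqxx in ab_cross.
have sum_S (f : T -> R) : (forall y, y \notin S -> f y = 0) ->
    \sum_(y in S) f y = \sum_(y in [set: T]) f y.
  move=> f_out; rewrite [LHS]big_mkcond [RHS]big_mkcond.
  by apply: eq_bigr => y _; rewrite in_setT; case: ifPn => // /f_out->.
exists A; split.
- by move=> a b _ _; apply: A_ge0; rewrite inE.
- by move=> a b aS bS; rewrite FE //; apply: A_gt0; rewrite inE.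
- move=> a aS; rewrite sum_S ?A_row // => y yS.
  by apply: A_cross; rewrite aS (negbTE yS).
- move=> b bS; rewrite sum_S ?A_col // => x xS.
  by apply: A_cross; rewrite bS (negbTE xS).
Qed.

End InducedSubdigraphs.

Section SemiconnectedDigraphs.

Variables (T : finType) (E : rel T).
Hypothesis symE : connect_sym E.
Local Notation component := (component E).

Lemma component_closed x : closed E (component x).
Proof. by move=> a b /(connect_closed symE x); rewrite !inE. Qed.

Lemma component_root x : component (fingraph.root E x) = component x.
Proof.
by apply/setP => y; rewrite !inE -(same_connect symE (connect_root E x)).
Qed.

Lemma component_strongly_connected x :
  strongly_connected_sub (component x) (induced E (component x)).
Proof.
move=> v w; rewrite !inE => xv xw.
apply: connect_induced_closed (component_closed x) _ _; first by rewrite inE.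
by apply: connect_trans xw; rewrite symE.
Qed.

Lemma component_scc x : is_scc E (component x) (induced E (component x)).
Proof.
split; first by apply/set0Pn; exists x; apply: mem_component.
- exact: induced_subdigraph.
- exact: component_strongly_connected.
move=> S F sF scF sub_xS sub_F.
have xS : x \in S by apply: (subsetP sub_xS); apply: mem_component.
have eS : S = component x.
  by apply/eqP; rewrite eqEsubset sub_xS andbT (strongly_connected_sub_component sF).
split=> // a b; apply/idP/idP => [|/sub_F //].
by move=> /sF /and3P[aS bS ab]; apply/and3P; rewrite -eS.
Qed.

Lemma scc_component S F x :
  is_scc E S F -> x \in S -> S = component x /\ {in S &, F =2 E}.
Proof.
case=> _ sF scF maxSF xS.
have sub_Sx := strongly_connected_sub_component sF scF xS.
have sub_F a b : F a b -> induced E (component x) a b.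
  by move=> /sF /and3P[aS bS ab]; apply/and3P; rewrite ab !(subsetP sub_Sx).
have [eS eF] := maxSF _ _ (@induced_subdigraph _ E (component x))
  (@component_strongly_connected x) sub_Sx sub_F.
by split=> // a b aS bS; rewrite -eF /induced /= eS aS bS.
Qed.

Lemma ds_glue_components (R : realType) :
  (forall x, ds_on R (component x) (induced E (component x))) ->
  doubly_stochasticable R E.
Proof.
move=> /choice[M dsM].
pose A a b := if connect E a b then M (fingraph.root E a) a b else 0.
(* Indexing the blocks by [root] makes all vertices of a component use the same
   block, which the column sums rely on. *)
have dsM_root a := dsM (fingraph.root E a).
exists A; split.
- move=> a b _ _; rewrite /A; case: ifP => // ab.
  case: (dsM_root a); rewrite component_root => M_ge0 _ _ _.
  by apply: M_ge0; rewrite ?inE.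
- move=> a b _ _; rewrite /A; case: ifP => ab.
    case: (dsM_root a); rewrite component_root => _ M_gt0 _ _.
    by rewrite M_gt0 ?inE // /induced /= !inE connect0 ab.
  by rewrite ltxx; split=> // /connect1; rewrite ab.
- move=> a _; case: (dsM_root a); rewrite component_root => _ _ M_row _.
  rewrite -(M_row a (mem_component E a)) [LHS]big_mkcond [RHS]big_mkcond.
  by apply: eq_bigr => y _; rewrite in_setT inE.
- move=> b _; case: (dsM_root b); rewrite component_root => _ _ _ M_col.
  rewrite -(M_col b (mem_component E b)) [LHS]big_mkcond [RHS]big_mkcond.
  apply: eq_bigr => a _; rewrite in_setT inE /A symE.
  by case: ifP => // ba; rewrite (fingraph.rootP symE ba).
Qed.

End SemiconnectedDigraphs.

Theorem lemma3p1 (R : realType) (T : finType) (E : rel T) :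
  strongly_semiconnected E ->
  (doubly_stochasticable R E <->
   forall (S : {set T}) (F : rel T), is_scc E S F -> ds_on R S F).
Proof.
move=> /semiconnected_connect_sym symE; split=> [dsE S F sccSF | ds_scc].
- have [x xS] : exists x, x \in S by case: sccSF => /set0Pn.
  have [eS FE] := scc_component symE sccSF xS.
  by apply: ds_on_closed FE dsE; rewrite eS; apply: component_closed.
- by apply: (ds_glue_components symE) => x; apply/ds_scc/component_scc.
Qed.
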